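(* Let $x$ be a dyadic rational with $x\ge 0$. Then there exists a tower $T$ with $T=x$ such that every story $S$ of $T$ satisfies $S\ge 0$.
   Context: Games are short normal-play combinatorial games with the usual disjunctive sum $+$ and order/equality of values. Canonical integers: $0\cong\{\mid\}$, $n\cong\{n-1\mid\}$ for $n>0$, $n\cong\{\mid n+1\}$ for $n<0$. The ordinal sum is $G\mathbin{:}H\cong\{L(G),\,G\mathbin{:}L(H)\mid R(G),\,G\mathbin{:}R(H)\}$ (it is associative), and $\bigodot_{i=1}^n G_i$ denotes $G_1\mathbin{:}G_2\mathbin{:}\cdots\mathbin{:}G_n$. A tower is a game $T=\bigodot_{i=1}^n(b_i+r_i)$ where each $b_i$ is a non-negative integer in canonical form and each $r_i$ is a non-positive integer in canonical form; each $b_i+r_i$ is called a story of $T$. *)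

From mathcomp Require Import all_boot.
Set Implicit Arguments. Unset Strict Implicit. Unset Printing Implicit Defensive.

Inductive game : Type := Game of seq game & seq game.

Definition lefts (G : game) : seq game := let: Game l _ := G in l.
Definition rights (G : game) : seq game := let: Game _ r := G in r.

Fixpoint gsize (G : game) : nat :=
  let: Game l r := G in (sumn (map gsize l) + sumn (map gsize r)).+1.

(* Standard order: G <= H iff no G^L with H <= G^L and no H^R with H^R <= G.
   Implemented with fuel; the fuel gsize G + gsize H is always sufficient. *)
Fixpoint leb_fuel (n : nat) (G H : game) : bool :=
  match n with
  | 0 => true
  | n.+1 => all (fun gl => ~~ leb_fuel n H gl) (lefts G)
            && all (fun hr => ~~ leb_fuel n hr G) (rights H)
  end.

Definition game_le (G H : game) : bool := leb_fuel (gsize G + gsize H) G H.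

Definition game_eq (G H : game) : Prop := game_le G H /\ game_le H G.

Fixpoint game_add (G : game) : game -> game :=
  let: Game gl gr := G in
  fix addH (H : game) : game :=
    let: Game hl hr := H in
    Game (map (fun g => game_add g H) gl ++ map addH hl)
         (map (fun g => game_add g H) gr ++ map addH hr).

Fixpoint ord_sum (G H : game) : game :=
  let: Game hl hr := H in
  Game (lefts G ++ map (ord_sum G) hl) (rights G ++ map (ord_sum G) hr).

Definition game0 : game := Game [::] [::].

Fixpoint nat_game (n : nat) : game :=
  match n with 0 => game0 | n.+1 => Game [:: nat_game n] [::] end.

Fixpoint negnat_game (n : nat) : game :=
  match n with 0 => game0 | n.+1 => Game [::] [:: negnat_game n] end.

(* A story b + r, with b = nat_game s.1 >= 0 and r = negnat_game s.2 <= 0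
   (i.e. r is the canonical integer -s.2). *)
Definition story (s : nat * nat) : game := game_add (nat_game s.1) (negnat_game s.2).

(* The tower with stories s0, s1, ..., sn (n+1 >= 1 stories, bottom first):
   story s0 : story s1 : ... : story sn (ordinal sum is associative). *)
Fixpoint tower_aux (s0 : nat * nat) (ss : seq (nat * nat)) : game :=
  match ss with
  | [::] => story s0
  | s1 :: ss' => ord_sum (story s0) (tower_aux s1 ss')
  end.

(* Canonical form of the non-negative dyadic rational m / 2^k. *)
Fixpoint dyadic_game (m k : nat) : game :=
  match k with
  | 0 => nat_game m
  | k'.+1 => if ~~ odd m then dyadic_game m./2 k'
             else Game [:: dyadic_game m./2 k'] [:: dyadic_game m./2.+1 k']
  end.

From mathcomp Require Import all_boot all_order all_algebra zify.
From Stdlib Require List.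

(* A number game Q of value a = N/2^e is tight when its options keep distance
   at least 2^-e from a, that distance being attained on the right.  Then the
   ordinal sum Q : y equals a + y/2^(e+1) for every dyadic 0 <= y <= 1, and
   Q : 1 is again tight, at the midpoint of [a, a + 2^-e].  To realise
   x = A + r/2^k (0 <= r < 2^k) as a tower, start from the story (A+1) + (-1),
   which is tight at A; while x lies in the upper half of the current
   interval, stack the story 1 and pass to that half; once x lies in the
   lower half, finish with a tower for the rescaled remainder, which has a
   smaller denominator.  Values are computed by the simplicity theorem, under
   which number games compare as their values. *)

Set Implicit Arguments.
Unset Strict Implicit.
Unset Printing Implicit Defensive.

Import Order.TTheory GRing.Theory Num.Theory.

Lemma measure_ind (T : Type) (f : T -> nat) (P : T -> Prop) :
  (forall x, (forall y, f y < f x -> P y) -> P x) -> forall x, P x.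
Proof.
move=> IH x; suff: forall n y, f y < n -> P y by apply; exact: ltnSn.
elim=> // n IHn y; rewrite ltnS => le_yn; apply: IH => z lt_zy.
exact: IHn (leq_trans lt_zy le_yn).
Qed.
Arguments measure_ind {T} f {P}.

Lemma eq_all_In (T : Type) (p q : pred T) s :
  (forall x, List.In x s -> p x = q x) -> all p s = all q s.
Proof.
elim: s => //= x s IH pq; rewrite pq; last by left.
by rewrite IH // => y Hy; apply: pq; right.
Qed.

Section Forall2In.

Variables (A B : Type) (R : A -> B -> Prop).

Lemma Forall2_In_l s t a :
  List.Forall2 R s t -> List.In a s -> exists2 b, List.In b t & R a b.
Proof.
elim=> [|a' b' {}s {}t Rab _ IH] //= [<-|/IH [b Hb Rb]]; first by exists b'; [left|].
by exists b; [right|].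
Qed.

Lemma Forall2_In_r s t b :
  List.Forall2 R s t -> List.In b t -> exists2 a, List.In a s & R a b.
Proof.
elim=> [|a' b' {}s {}t Rab _ IH] //= [<-|/IH [a Ha Ra]]; first by exists a'; [left|].
by exists a; [right|].
Qed.

Lemma Forall2_In_ex s :
  (forall a, List.In a s -> exists b, R a b) -> exists t, List.Forall2 R s t.
Proof.
elim: s => [|a s IH] Rs; first by exists [::].
have [b Rab] := Rs a (or_introl erefl).
have [t Rt] := IH (fun a' Ha' => Rs a' (or_intror Ha')).
by exists (b :: t); constructor.
Qed.

End Forall2In.

Lemma gsize_gt0 G : 0 < gsize G.
Proof. by case: G. Qed.

Lemma gsize_le_sumn g l : List.In g l -> gsize g <= sumn (map gsize l).
Proof.
elim: l => //= h l IH [<-|/IH le_g]; first exact: leq_addr.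
exact: leq_trans le_g (leq_addl _ _).
Qed.

Lemma gsize_left G g : List.In g (lefts G) -> gsize g < gsize G.
Proof. by case: G => l r /gsize_le_sumn /= le_g; rewrite ltnS (leq_trans le_g) ?leq_addr. Qed.

Lemma gsize_right G g : List.In g (rights G) -> gsize g < gsize G.
Proof. by case: G => l r /gsize_le_sumn /= le_g; rewrite ltnS (leq_trans le_g) ?leq_addl. Qed.

Lemma game_ind2 (P : game -> game -> Prop) :
  (forall G H, (forall G' H', gsize G' + gsize H' < gsize G + gsize H -> P G' H') ->
    P G H) ->
  forall G H, P G H.
Proof.
move=> IH G H; suff: forall p : game * game, P p.1 p.2 by move/(_ (G, H)).
apply: (@measure_ind _ (fun p : game * game => gsize p.1 + gsize p.2)
                    (fun p => P p.1 p.2)) => -[G' H'] IH'.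
by apply: IH => G'' H'' lt; apply: (IH' (G'', H'')).
Qed.

Lemma game_ind3 (P : game -> game -> game -> Prop) :
  (forall G H K, (forall G' H' K', gsize G' + gsize H' + gsize K' <
                                   gsize G + gsize H + gsize K -> P G' H' K') ->
    P G H K) ->
  forall G H K, P G H K.
Proof.
move=> IH G H K.
suff: forall t : game * game * game, P t.1.1 t.1.2 t.2 by move/(_ (G, H, K)).
apply: (@measure_ind _ (fun t : game * game * game => gsize t.1.1 + gsize t.1.2 + gsize t.2)
                    (fun t => P t.1.1 t.1.2 t.2)) => -[[G' H'] K'] IH'.
by apply: IH => G'' H'' K'' lt; apply: (IH' (G'', H'', K'')).
Qed.

Lemma leb_fuel_stable n n' G H : gsize G + gsize H <= n -> gsize G + gsize H <= n' ->
  leb_fuel n G H = leb_fuel n' G H.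
Proof.
have := gsize_gt0 G; elim: n n' G H => [|n IH] [|n'] G H G_gt0 le_n le_n' //=; try lia.
congr andb; apply: eq_all_In => g Hg; congr negb; apply: IH (gsize_gt0 _) _ _.
1,2: by have := gsize_left Hg; lia.
all: by have := gsize_right Hg; lia.
Qed.

Lemma game_leE G H : game_le G H =
  all (fun g => ~~ game_le H g) (lefts G) && all (fun h => ~~ game_le h G) (rights H).
Proof.
rewrite /game_le; case E: (gsize G + gsize H) => [|n] /=; first by have := gsize_gt0 G; lia.
congr andb; apply: eq_all_In => g Hg; congr negb; apply: leb_fuel_stable => //.
  by have := gsize_left Hg; lia.
by have := gsize_right Hg; lia.
Qed.

Lemma game_leP G H : reflect
  ((forall g, List.In g (lefts G) -> ~~ game_le H g) /\
   (forall h, List.In h (rights H) -> ~~ game_le h G))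
  (game_le G H).
Proof.
by rewrite game_leE; apply: (iffP andP) => -[lG rH]; split; apply/List.forallb_forall.
Qed.

Lemma game_le_refl G : game_le G G.
Proof.
move: G; apply: (measure_ind gsize) => G IH; apply/game_leP; split=> [g Hg|h Hh]; apply/negP.
  by case/game_leP=> /(_ g Hg); rewrite IH //; exact: gsize_left.
by case/game_leP=> _ /(_ h Hh); rewrite IH //; exact: gsize_right.
Qed.

Lemma game_le_leftN G g : List.In g (lefts G) -> ~~ game_le G g.
Proof. by move=> Hg; case/game_leP: (game_le_refl G) => /(_ g Hg). Qed.

Lemma game_le_rightN G h : List.In h (rights G) -> ~~ game_le h G.
Proof. by move=> Hh; case/game_leP: (game_le_refl G) => _ /(_ h Hh). Qed.

Lemma game_le_trans G H K : game_le G H -> game_le H K -> game_le G K.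
Proof.
move: G H K; apply: game_ind3 => G H K IH le_GH le_HK; apply/game_leP.
split=> [g Hg|h Hh]; apply/negP.
  move=> le_Kg; case/game_leP: le_GH => /(_ g Hg) /negP nle_Hg _; apply: nle_Hg.
  by apply: (IH H K g) => //; have := gsize_left Hg; lia.
move=> le_hG; case/game_leP: le_HK => _ /(_ h Hh) /negP; apply.
by apply: (IH h G H) => //; have := gsize_right Hh; lia.
Qed.

Lemma game_eq_refl G : game_eq G G.
Proof. by split; exact: game_le_refl. Qed.

Lemma game_eq_trans G H K : game_eq G H -> game_eq H K -> game_eq G K.
Proof.
by move=> [GH HG] [HK KH]; split; [exact: game_le_trans GH HK | exact: game_le_trans KH HG].
Qed.

Lemma lefts_ord_sum G H : lefts (ord_sum G H) = lefts G ++ map (ord_sum G) (lefts H).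
Proof. by case: H. Qed.

Lemma rights_ord_sum G H : rights (ord_sum G H) = rights G ++ map (ord_sum G) (rights H).
Proof. by case: H. Qed.

Lemma ord_sum_le G A B : game_le (ord_sum G A) (ord_sum G B) = game_le A B.
Proof.
move: A B; apply: game_ind2 => A B IH.
have in_lefts H a : List.In a (lefts H) -> List.In (ord_sum G a) (lefts (ord_sum G H)).
  by move=> Ha; rewrite lefts_ord_sum List.in_app_iff; right; exact: List.in_map.
have in_rights H b : List.In b (rights H) -> List.In (ord_sum G b) (rights (ord_sum G H)).
  by move=> Hb; rewrite rights_ord_sum List.in_app_iff; right; exact: List.in_map.
apply/game_leP/game_leP => -[lA rB]; split.
- move=> a Ha; rewrite -IH; first exact: lA (in_lefts _ _ Ha).
  by have := gsize_left Ha; lia.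
- move=> b Hb; rewrite -IH; first exact: rB (in_rights _ _ Hb).
  by have := gsize_right Hb; lia.
- rewrite lefts_ord_sum => x /List.in_app_iff [Hx|/List.in_map_iff [a [<- Ha]]].
    by apply: game_le_leftN; rewrite lefts_ord_sum List.in_app_iff; left.
  by rewrite IH; [exact: lA | have := gsize_left Ha; lia].
- rewrite rights_ord_sum => x /List.in_app_iff [Hx|/List.in_map_iff [b [<- Hb]]].
    by apply: game_le_rightN; rewrite rights_ord_sum List.in_app_iff; left.
  by rewrite IH; [exact: rB | have := gsize_right Hb; lia].
Qed.

Lemma ord_sum_eq G A B : game_eq A B -> game_eq (ord_sum G A) (ord_sum G B).
Proof. by rewrite /game_eq !ord_sum_le. Qed.

Lemma ord_sum0 G : ord_sum G game0 = G.
Proof. by case: G => l r /=; rewrite !cats0. Qed.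

Lemma ord_sumA A B C : ord_sum A (ord_sum B C) = ord_sum (ord_sum A B) C.
Proof.
move: C; apply: (measure_ind gsize) => -[l r] IH /=.
rewrite lefts_ord_sum rights_ord_sum !map_cat !catA -!map_comp.
congr (Game (_ ++ _) (_ ++ _)); apply: List.map_ext_in => c Hc /=; apply: IH.
  exact: (gsize_left (G := Game l r)).
exact: (gsize_right (G := Game l r)).
Qed.

Local Open Scope ring_scope.

Definition dyadic (N : int) (e : nat) : rat := N%:~R / (2 ^ e)%N%:R.

Lemma pow2_neq0 e : (2 ^ e)%N%:R != 0 :> rat.
Proof. by rewrite pnatr_eq0 expn_eq0. Qed.

Lemma dyadic_lt N M e : (dyadic N e < dyadic M e) = (N < M).
Proof. by rewrite ltr_pM2r ?ltr_int // invr_gt0 ltr0n expn_gt0. Qed.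

Lemma dyadic_le N M e : (dyadic N e <= dyadic M e) = (N <= M).
Proof. by rewrite ler_pM2r ?ler_int // invr_gt0 ltr0n expn_gt0. Qed.

Lemma dyadic_shift N e d : dyadic N e = dyadic (N * (2 ^ d)%N) (e + d).
Proof.
rewrite /dyadic intrM expnD natrM -mulf_div divff ?mulr1 //.
exact: pow2_neq0.
Qed.

Lemma dyadic_double N e : dyadic N e = dyadic (N * 2) e.+1.
Proof. by rewrite (dyadic_shift N e 1) addn1. Qed.

Lemma dyadic_doubleE N M e : M = N * 2 -> dyadic M e.+1 = dyadic N e.
Proof. by move->; rewrite [RHS]dyadic_double. Qed.

Lemma dyadic_int N : dyadic N 0 = N%:~R.
Proof. by rewrite /dyadic expn0 divr1. Qed.

(* The order of the simplicity theorem on dyadics: a smaller power of two as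
   denominator first, then, among integers, a smaller absolute value. *)
Definition simpler (x y : rat) : Prop :=
  (exists k, x * (2 ^ k)%N%:R \is a Num.int /\ y * (2 ^ k)%N%:R \isn't a Num.int) \/
  [/\ x \is a Num.int, y \is a Num.int & `|x| < `|y|].

Lemma int_mul_pow2 (x : rat) k l : (k <= l)%N ->
  x * (2 ^ k)%N%:R \is a Num.int -> x * (2 ^ l)%N%:R \is a Num.int.
Proof.
by move=> le_kl x_int; rewrite -(subnKC le_kl) expnD natrM mulrA rpredM ?natr_int.
Qed.

Lemma simpler_asym x y : simpler x y -> ~ simpler y x.
Proof.
have int_mul (x' : rat) k : x' \is a Num.int -> x' * (2 ^ k)%N%:R \is a Num.int.
  by move=> x'_int; rewrite rpredM ?natr_int.
case=> [[k [xk yk]]|[x_int y_int lt_xy]] [[l [yl xl]]|[y_int' x_int' lt_yx]].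
- by case/orP: (leq_total k l) => [/int_mul_pow2/(_ xk)|/int_mul_pow2/(_ yl)]; apply/negP.
- by move/negP: yk; rewrite int_mul.
- by move/negP: xl; rewrite int_mul.
- by move: (lt_trans lt_xy lt_yx); rewrite ltxx.
Qed.

Lemma simplest_dyadic N e z : dyadic (N - 1) e < z -> z < dyadic (N + 1) e ->
  z = dyadic N e \/ simpler (dyadic N e) z.
Proof.
move=> lt_z gt_z.
have [/intrP [M zM]|z_frac] := boolP (z * (2 ^ e)%N%:R \is a Num.int).
  have z_eq : z = dyadic M e by rewrite /dyadic -zM mulfK ?pow2_neq0.
  by rewrite z_eq !dyadic_lt in lt_z gt_z *; left; congr dyadic; lia.
by right; left; exists e; rewrite /dyadic mulfVK ?pow2_neq0 ?intr_int.
Qed.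

Lemma simplest_int (N : int) z :
  (0 < N -> (N - 1)%:~R < z) -> (N < 0 -> z < (N + 1)%:~R) ->
  z = N%:~R \/ simpler N%:~R z.
Proof.
move=> lt_z gt_z; have [/intrP [M z_eq]|z_frac] := boolP (z \is a Num.int); last first.
  by right; left; exists 0%N; rewrite !mulr1 intr_int.
have [eq_MN|neq_MN] := eqVneq M N; first by left; rewrite z_eq eq_MN.
right; right; rewrite z_eq !intr_int -!intr_norm ltr_int; split => //.
by move: lt_z gt_z; rewrite z_eq !ltr_int; lia.
Qed.

(* The values of the options are listed in [vl] and [vr] so that [is_num]
   occurs only positively. *)
Inductive is_num : game -> rat -> Prop :=
| IsNum l r (vl vr : seq rat) x :
    List.Forall2 is_num l vl -> List.Forall2 is_num r vr ->
    (forall v, List.In v vl -> v < x) -> (forall v, List.In v vr -> x < v) ->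
    (forall z, (forall v, List.In v vl -> v < z) -> (forall v, List.In v vr -> z < v) ->
       z = x \/ simpler x z) ->
    is_num (Game l r) x.

Theorem is_num_le G H x y : is_num G x -> is_num H y -> game_le G H = (x <= y).
Proof.
move: G H x y; apply: game_ind2 => G H IH x y NG NH.
case: NG IH => lG rG vlG vrG {}x FlG FrG ltG gtG simpG IH.
case: NH IH => lH rH vlH vrH {}y FlH FrH ltH gtH simpH IH.
have IHl g : List.In g lG -> forall v, is_num g v -> game_le (Game lH rH) g = (y <= v).
  move=> Hg v Nv; apply: IH (IsNum FlH FrH ltH gtH simpH) Nv.
  by have := gsize_left (G := Game lG rG) Hg; lia.
have IHr h : List.In h rH -> forall v, is_num h v -> game_le h (Game lG rG) = (v <= x).
  move=> Hh v Nv; apply: IH Nv (IsNum FlG FrG ltG gtG simpG).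
  by have := gsize_right (G := Game lH rH) Hh; lia.
apply/game_leP/idP => /= [[nleG nleH]|le_xy]; last first.
  split=> [g Hg|h Hh].
    have [v Hv Nv] := Forall2_In_l FlG Hg.
    by rewrite (IHl g Hg v Nv) -ltNge (lt_le_trans (ltG v Hv)).
  have [v Hv Nv] := Forall2_In_l FrH Hh.
  by rewrite (IHr h Hh v Nv) -ltNge (le_lt_trans le_xy (gtH v Hv)).
rewrite leNgt; apply/negP => lt_yx.
have y_gt_lG v : List.In v vlG -> v < y.
  by case/(Forall2_In_r FlG) => g Hg Nv; rewrite ltNge -(IHl g Hg v Nv) nleG.
have x_lt_rH v : List.In v vrH -> x < v.
  by case/(Forall2_In_r FrH) => h Hh Nv; rewrite ltNge -(IHr h Hh v Nv) nleH.
have [eq_yx|simp_xy] := simpG y y_gt_lG (fun v Hv => lt_trans lt_yx (gtG v Hv)).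
  by move: lt_yx; rewrite eq_yx ltxx.
have [eq_xy|simp_yx] := simpH x (fun v Hv => lt_trans (ltH v Hv) lt_yx) x_lt_rH.
  by move: lt_yx; rewrite eq_xy ltxx.
exact: simpler_asym simp_xy simp_yx.
Qed.

Lemma is_num_unique G x y : is_num G x -> is_num G y -> x = y.
Proof.
move=> Nx Ny; apply/eqP; rewrite eq_le.
by rewrite -(is_num_le Nx Ny) -(is_num_le Ny Nx) game_le_refl.
Qed.

Lemma is_num_eq G H x : is_num G x -> is_num H x -> game_eq G H.
Proof. by move=> NG NH; split; rewrite (is_num_le NG NH, is_num_le NH NG). Qed.

Lemma is_numI l r x :
  (forall g, List.In g l -> exists2 v, is_num g v & v < x) ->
  (forall g, List.In g r -> exists2 v, is_num g v & x < v) ->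
  (forall z, (forall g v, List.In g l -> is_num g v -> v < z) ->
             (forall g v, List.In g r -> is_num g v -> z < v) -> z = x \/ simpler x z) ->
  is_num (Game l r) x.
Proof.
move=> numl numr simp.
have [vl Fl] : exists vl, List.Forall2 (fun g v => is_num g v /\ v < x) l vl.
  by apply: Forall2_In_ex => g /numl [v]; exists v.
have [vr Fr] : exists vr, List.Forall2 (fun g v => is_num g v /\ x < v) r vr.
  by apply: Forall2_In_ex => g /numr [v]; exists v.
have Fl' := List.Forall2_impl is_num (fun g v (Nv : is_num g v /\ v < x) => proj1 Nv) Fl.
have Fr' := List.Forall2_impl is_num (fun g v (Nv : is_num g v /\ x < v) => proj1 Nv) Fr.
apply: (IsNum Fl' Fr').
- by move=> v /(Forall2_In_r Fl) [g _ []].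
- by move=> v /(Forall2_In_r Fr) [g _ []].
move=> z ltz gtz; apply: simp => g v Hg Nv.
  have [v' Hv' [Nv' _]] := Forall2_In_l Fl Hg.
  by rewrite (is_num_unique Nv Nv'); apply: ltz.
have [v' Hv' [Nv' _]] := Forall2_In_l Fr Hg.
by rewrite (is_num_unique Nv Nv'); apply: gtz.
Qed.

Definition nums_le (l : seq game) (a : rat) :=
  forall g, List.In g l -> exists2 v, is_num g v & v <= a.

Definition nums_ge (r : seq game) (b : rat) :=
  forall g, List.In g r -> exists2 v, is_num g v & b <= v.

Lemma nums_le0 a : nums_le [::] a.
Proof. by move=> g []. Qed.

Lemma nums_ge0 b : nums_ge [::] b.
Proof. by move=> g []. Qed.

Lemma nums_le1 g v a : is_num g v -> v <= a -> nums_le [:: g] a.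
Proof. by move=> Nv le_va g' [<-|[]]; exists v. Qed.

Lemma nums_ge1 g v b : is_num g v -> b <= v -> nums_ge [:: g] b.
Proof. by move=> Nv le_bv g' [<-|[]]; exists v. Qed.

Lemma nums_le_cat l l' a : nums_le l a -> nums_le l' a -> nums_le (l ++ l') a.
Proof. by move=> numl numl' g /List.in_app_iff [/numl|/numl']. Qed.

Lemma nums_ge_cat r r' b : nums_ge r b -> nums_ge r' b -> nums_ge (r ++ r') b.
Proof. by move=> numr numr' g /List.in_app_iff [/numr|/numr']. Qed.

Lemma nums_le_trans l a a' : a <= a' -> nums_le l a -> nums_le l a'.
Proof. by move=> le_a numl g /numl [v Nv le_v]; exists v => //; exact: le_trans le_a. Qed.

Lemma nums_ge_trans r b b' : b' <= b -> nums_ge r b -> nums_ge r b'.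
Proof. by move=> le_b numr g /numr [v Nv le_v]; exists v => //; exact: le_trans le_v. Qed.

Lemma is_numI_int l r (N : int) :
  nums_le l (N - 1)%:~R -> nums_ge r (N + 1)%:~R ->
  (0 < N -> exists2 g, List.In g l & is_num g (N - 1)%:~R) ->
  (N < 0 -> exists2 g, List.In g r & is_num g (N + 1)%:~R) ->
  is_num (Game l r) N%:~R.
Proof.
move=> numl numr exl exr; apply: is_numI.
- move=> g /numl [v Nv le_v]; exists v => //.
  by apply: le_lt_trans le_v _; rewrite ltr_int; lia.
- move=> g /numr [v Nv le_v]; exists v => //.
  by apply: lt_le_trans le_v; rewrite ltr_int; lia.
move=> z ltz gtz; apply: simplest_int.
  by case/exl => g Hg Ng; exact: ltz Ng.
by case/exr => g Hg Ng; exact: gtz Ng.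
Qed.

Lemma is_numI_dyadic l r (M : int) d :
  nums_le l (dyadic (M - 1) d) -> nums_ge r (dyadic (M + 1) d) ->
  (exists2 g, List.In g l & is_num g (dyadic (M - 1) d)) ->
  (exists2 g, List.In g r & is_num g (dyadic (M + 1) d)) ->
  is_num (Game l r) (dyadic M d).
Proof.
move=> numl numr [gl Hgl Ngl] [gr Hgr Ngr]; apply: is_numI.
- move=> g /numl [v Nv le_v]; exists v => //.
  by apply: le_lt_trans le_v _; rewrite dyadic_lt; lia.
- move=> g /numr [v Nv le_v]; exists v => //.
  by apply: lt_le_trans le_v; rewrite dyadic_lt; lia.
by move=> z ltz gtz; apply: simplest_dyadic; [exact: ltz Ngl | exact: gtz Ngr].
Qed.

Lemma story_eq b c : story (b, c) =
  Game (if b is b'.+1 then [:: story (b', c)] else [::])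
       (if c is c'.+1 then [:: story (b, c')] else [::]).
Proof. by case: b c => [|b] [|c]. Qed.

Lemma story_nat b : story (b, 0%N) = nat_game b.
Proof. by elim: b => // b IH; rewrite story_eq IH. Qed.

Lemma is_num_story b c (N : int) : N = b%:Z - c%:Z -> is_num (story (b, c)) N%:~R.
Proof.
elim: b c N => [|b IHb] c; elim: c => [|c IHc] N ->; rewrite story_eq; apply: is_numI_int.
all: try solve [exact: nums_le0 | exact: nums_ge0 | lia].
- by apply: nums_ge1 (IHc _ erefl) _; rewrite ler_int; lia.
- by exists (story (0, c)); [left | apply: IHc; lia].
- by apply: nums_le1 (IHb 0%N _ erefl) _; rewrite ler_int; lia.
- by exists (story (b, 0)); [left | apply: IHb; lia].
- by apply: nums_le1 (IHb c.+1 _ erefl) _; rewrite ler_int; lia.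
- by apply: nums_ge1 (IHc _ erefl) _; rewrite ler_int; lia.
- by exists (story (b, c.+1)); [left | apply: IHb; lia].
- by exists (story (b.+1, c)); [left | apply: IHc; lia].
Qed.

Definition nonneg_story (s : nat * nat) : bool := (s.2 <= s.1)%N.

Lemma story_ge0 s : nonneg_story s -> game_le game0 (story s).
Proof.
case: s => b c; rewrite /nonneg_story /= => le_cb.
rewrite (is_num_le (is_num_story (b := 0) (c := 0) erefl) (is_num_story erefl)).
by rewrite ler_int; lia.
Qed.

Lemma is_num_dyadic_game m k : is_num (dyadic_game m k) (dyadic m k).
Proof.
elim: k m => [|k IHk] m; first by rewrite dyadic_int /= -story_nat; apply: is_num_story; lia.
have m_eq : m = (m./2 * 2 + odd m)%N by rewrite -{1}(odd_double_half m) -muln2 addnC.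
have [m_odd|m_even] := boolP (odd m); rewrite /= ?m_odd ?m_even /=.
  apply: is_numI_dyadic.
  - by apply: nums_le1 (IHk _) _; rewrite dyadic_double dyadic_le; lia.
  - by apply: nums_ge1 (IHk _) _; rewrite [dyadic m./2.+1 k]dyadic_double dyadic_le; lia.
  - exists (dyadic_game m./2 k); first by left.
    have -> : dyadic (m%:Z - 1) k.+1 = dyadic m./2 k by apply: dyadic_doubleE; lia.
    exact: IHk.
  exists (dyadic_game m./2.+1 k); first by left.
  have -> : dyadic (m%:Z + 1) k.+1 = dyadic m./2.+1 k by apply: dyadic_doubleE; lia.
  exact: IHk.
have -> : dyadic m k.+1 = dyadic m./2 k by apply: dyadic_doubleE; lia.
exact: IHk.
Qed.

Definition tight Q (N : int) e := [/\ is_num Q (dyadic N e),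
  nums_le (lefts Q) (dyadic (N - 1) e), nums_ge (rights Q) (dyadic (N + 1) e) &
  exists2 g, List.In g (rights Q) & is_num g (dyadic (N + 1) e)].

Lemma tight_story n : tight (story (n.+1, 1)) n 0.
Proof.
rewrite /tight !dyadic_int; split.
- by apply: is_num_story; lia.
- by rewrite story_eq; apply: nums_le1 (is_num_story (N := n%:Z - 1) _) _ => //; lia.
- by rewrite story_eq; apply: nums_ge1 (is_num_story (N := n%:Z + 1) _) _ => //; lia.
by rewrite story_eq; exists (story (n.+1, 0)); [left | apply: is_num_story; lia].
Qed.

Lemma ord_sum1 Q : ord_sum Q (nat_game 1) = Game (lefts Q ++ [:: Q]) (rights Q).
Proof. by case: Q => l r /=; rewrite !cats0. Qed.

Lemma tight_ord_sum1 Q N e : tight Q N e -> tight (ord_sum Q (nat_game 1)) (N * 2 + 1) e.+1.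
Proof.
case=> NQ numl numr [g Hg Ng].
have numl1 : nums_le (lefts Q ++ [:: Q]) (dyadic (N * 2 + 1 - 1) e.+1).
  apply: nums_le_cat; last by apply: nums_le1 NQ _; rewrite dyadic_double dyadic_le; lia.
  by apply: nums_le_trans numl; rewrite dyadic_double dyadic_le; lia.
have numr1 : nums_ge (rights Q) (dyadic (N * 2 + 1 + 1) e.+1).
  by apply: nums_ge_trans numr; rewrite [dyadic (N + 1) e]dyadic_double dyadic_le; lia.
have Ng1 : is_num g (dyadic (N * 2 + 1 + 1) e.+1).
  by have -> : dyadic (N * 2 + 1 + 1) e.+1 = dyadic (N + 1) e by apply: dyadic_doubleE; lia.
rewrite /tight ord_sum1; split => //; last by exists g.
apply: is_numI_dyadic => //; last by exists g.
exists Q; first by apply/List.in_app_iff; right; left.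
by have -> : dyadic (N * 2 + 1 - 1) e.+1 = dyadic N e by apply: dyadic_doubleE; lia.
Qed.

Lemma is_num_ord_sum_cut Q N e a b M d : tight Q N e ->
  (N - 1) * (2 ^ d)%N <= M - 1 -> M + 1 <= (N + 1) * (2 ^ d)%N ->
  is_num (ord_sum Q a) (dyadic (M - 1) (e + d)) ->
  is_num (ord_sum Q b) (dyadic (M + 1) (e + d)) ->
  is_num (ord_sum Q (Game [:: a] [:: b])) (dyadic M (e + d)).
Proof.
case=> NQ numl numr _ lo hi Na Nb; apply: is_numI_dyadic.
- apply: nums_le_cat; last exact: nums_le1 Na (lexx _).
  by apply: nums_le_trans numl; rewrite (dyadic_shift _ e d) dyadic_le.
- apply: nums_ge_cat; last exact: nums_ge1 Nb (lexx _).
  by apply: nums_ge_trans numr; rewrite (dyadic_shift _ e d) dyadic_le.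
- by exists (ord_sum Q a) => //; apply/List.in_app_iff; right; left.
by exists (ord_sum Q b) => //; apply/List.in_app_iff; right; left.
Qed.

Lemma is_num_ord_sum_tight Q N e m k : tight Q N e -> (m <= 2 ^ k)%N ->
  is_num (ord_sum Q (dyadic_game m k)) (dyadic (N * (2 ^ k.+1)%N + m) (e + k.+1)).
Proof.
move=> tQ; elim: k m => [|k IHk] m le_m.
  case: m le_m => [|[|]] // _; rewrite addn1.
    have -> : dyadic (N * (2 ^ 1)%N + 0%N) e.+1 = dyadic N e.
      by apply: dyadic_doubleE; lia.
    by rewrite [dyadic_game _ _]/= ord_sum0; case: tQ.
  have -> : dyadic (N * (2 ^ 1)%N + 1%N) e.+1 = dyadic (N * 2 + 1) e.+1.
    by congr dyadic; lia.
  by case: (tight_ord_sum1 tQ); rewrite ord_sum1.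
have m_eq : m = (m./2 * 2 + odd m)%N by rewrite -{1}(odd_double_half m) -muln2 addnC.
have pow_gt0 := expn_gt0 2 k.
have [m_odd|m_even] := boolP (odd m); rewrite /= ?m_odd ?m_even /=; last first.
  have -> : dyadic (N * (2 ^ k.+2)%N + m) (e + k.+2) =
            dyadic (N * (2 ^ k.+1)%N + m./2) (e + k.+1).
    by rewrite addnS; apply: dyadic_doubleE; rewrite !expnS; lia.
  by apply: IHk; rewrite expnS in le_m; lia.
apply: (is_num_ord_sum_cut tQ).
- by rewrite !expnS in le_m *; lia.
- by rewrite !expnS in le_m *; lia.
- have -> : dyadic (N * (2 ^ k.+2)%N + m - 1) (e + k.+2) =
            dyadic (N * (2 ^ k.+1)%N + m./2) (e + k.+1).
    by rewrite addnS; apply: dyadic_doubleE; rewrite !expnS; lia.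
  by apply: IHk; rewrite expnS in le_m; lia.
have -> : dyadic (N * (2 ^ k.+2)%N + m + 1) (e + k.+2) =
          dyadic (N * (2 ^ k.+1)%N + m./2.+1) (e + k.+1).
  by rewrite addnS; apply: dyadic_doubleE; rewrite !expnS; lia.
by apply: IHk; rewrite expnS in le_m; lia.
Qed.

Local Close Scope ring_scope.

Definition has_nonneg_tower (G : game) : Prop :=
  exists s0 ss, all nonneg_story (s0 :: ss) /\ game_eq (tower_aux s0 ss) G.

Lemma tower_over_tight_lower d Q (N X : nat) e :
  (forall r, has_nonneg_tower (dyadic_game r d)) -> tight Q N e ->
  N * 2 ^ d.+1 <= X <= N * 2 ^ d.+1 + 2 ^ d ->
  exists s0 ss, all nonneg_story (s0 :: ss) /\
    game_eq (ord_sum Q (tower_aux s0 ss)) (dyadic_game X (e + d.+1)).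
Proof.
move=> towers tQ /andP [lo hi].
have [s0 [ss [nn eqT]]] := towers (X - N * 2 ^ d.+1).
exists s0, ss; split => //; apply: game_eq_trans (ord_sum_eq Q eqT) _.
have le_r : X - N * 2 ^ d.+1 <= 2 ^ d by lia.
apply: is_num_eq (is_num_ord_sum_tight tQ le_r) _.
rewrite (_ : dyadic _ _ = dyadic X (e + d.+1)); first exact: is_num_dyadic_game.
by congr dyadic; lia.
Qed.

Lemma tower_over_tight d :
  (forall d' r, d' <= d -> has_nonneg_tower (dyadic_game r d')) ->
  forall Q (N X : nat) e, tight Q N e -> N * 2 ^ d.+1 <= X < N.+1 * 2 ^ d.+1 ->
  exists s0 ss, all nonneg_story (s0 :: ss) /\
    game_eq (ord_sum Q (tower_aux s0 ss)) (dyadic_game X (e + d.+1)).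
Proof.
elim: d => [|d IHd] towers Q N X e tQ /andP [lo hi].
  apply: tower_over_tight_lower (towers 0 ^~ (leqnn 0)) tQ _.
  by rewrite expn1 expn0 in lo hi *; lia.
have [le_X|gt_X] := leqP X (N * 2 ^ d.+2 + 2 ^ d.+1).
  by apply: tower_over_tight_lower (towers d.+1 ^~ (leqnn _)) tQ _; rewrite lo le_X.
have tQ1 : tight (ord_sum Q (nat_game 1)) (N * 2 + 1)%N e.+1.
  by rewrite PoszD PoszM; exact: tight_ord_sum1.
have [|s0 [ss [nn eqT]]] := IHd (fun d' r le => towers d' r (leqW le)) _ _ X _ tQ1.
  by rewrite !expnS in lo hi gt_X *; lia.
exists (1, 0), (s0 :: ss); split; first exact: nn.
by rewrite -[tower_aux _ _]/(ord_sum (nat_game 1) (tower_aux s0 ss)) ord_sumA -addSnnS.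
Qed.

Lemma has_nonneg_tower_dyadic k m : has_nonneg_tower (dyadic_game m k).
Proof.
elim/ltn_ind: k m => -[|d] IH m.
  exists (m, 0), [::]; split => //.
  by rewrite -[dyadic_game m 0]/(nat_game m) -story_nat; exact: game_eq_refl.
set A := m %/ 2 ^ d.+1.
have bounds : A * 2 ^ d.+1 <= m < A.+1 * 2 ^ d.+1 by rewrite leq_trunc_div ltn_ceil ?expn_gt0.
have [s0 [ss [nn eqT]]] := tower_over_tight (fun d' r le => IH d' le r) (tight_story A) bounds.
by exists (A.+1, 1), (s0 :: ss); split; [exact: nn | rewrite add0n in eqT].
Qed.

Theorem theorem3p4 (m k : nat) :
  exists (s0 : nat * nat) (ss : seq (nat * nat)),
    game_eq (tower_aux s0 ss) (dyadic_game m k) /\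
    (forall s, s \in s0 :: ss -> game_le game0 (story s)).
Proof.
have [s0 [ss [nn eqT]]] := has_nonneg_tower_dyadic k m.
by exists s0, ss; split=> // s /(allP nn); exact: story_ge0.
Qed.
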